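(* Let Assumption 1 hold and let $\{\mathbf x_k\}$, $\{\rho_k\}$, $\{\Delta_k\}$ be generated by Algorithm MADS-PIP, with path-following index set $\mathcal K_\rho$. Then $\lim_{k\in\mathcal K_\rho}\Delta_k=0$.
   Context: Consider the problem of minimizing $f(\mathbf x)$ over $\mathbf x\in\mathbb R^n$ subject to $g_\ell(\mathbf x)\le 0$ ($\ell=1,\dots,m$) and $h_j(\mathbf x)=0$ ($j=1,\dots,p$), where $f,g_\ell,h_j:\mathbb R^n\to\mathbb R\cup\{+\infty\}$. The index set $\{1,\dots,m\}$ is partitioned into disjoint sets $\mathcal G^{int}$ and $\mathcal G^{ext}$, fixed throughout. Define $\Omega^{int}=\{\mathbf x: g_\ell(\mathbf x)\le 0\ \forall\ell\in\mathcal G^{int}\}$, $\Omega^{ext}=\{\mathbf x: g_\ell(\mathbf x)\le0\ \forall \ell\in\mathcal G^{ext},\ h_j(\mathbf x)=0\ \forall j\}$, $\Omega=\Omega^{int}\cap\Omega^{ext}$. Let $\phi^{prox}(\mathbf x)=\max_{\ell\in\mathcal G^{int}}g_\ell(\mathbf x)$; let $c^{int}(\mathbf x)=-\prod_{\ell\in\mathcal G^{int}}\min\{1,-g_\ell(\mathbf x)\}$ if $g_\ell(\mathbf x)\le0$ for all $\ell\in\mathcal G^{int}$, and $c^{int}(\mathbf x)=\phi^{prox}(\mathbf x)$ otherwise; let $c^{ext}(\mathbf x)=\sum_{\ell\in\mathcal G^{ext}}(\max\{0,g_\ell(\mathbf x)\})^2+\sum_{j=1}^p h_j(\mathbf x)^2$.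 (If $\mathcal G^{int}=\emptyset$, then $c^{int}\equiv-1$ and $[\phi^{prox}]^2$ is read as $+\infty$.) For $\rho>0$ the merit function is $z(\mathbf x;\rho)=f(\mathbf x)-\rho\log(-c^{int}(\mathbf x))+\frac1\rho c^{ext}(\mathbf x)$ if $c^{int}(\mathbf x)<0$, and $z(\mathbf x;\rho)=+\infty$ otherwise. Algorithm MADS-PIP: inputs $\mathbf x_0$ with $g_\ell(\mathbf x_0)<0$ for all $\ell\in\mathcal G^{int}$ and $z(\mathbf x_0;\rho_0)<+\infty$, $\rho_0>0$, $\theta_\rho\in(0,1)$, $\Delta_0>0$, $\theta_\Delta\in(0,1)\cap\mathbb Q$, $\beta>1$. For $k=0,1,2,\dots$ (the algorithm never stops): mesh $\mathcal M_k=\{\mathbf x_k+\delta_k\mathbf u:\mathbf u\in\mathbb Z^n\}$ with $\delta_k=\min\{\Delta_k,\Delta_k^2/\Delta_0\}$; frame $\mathcal F_k=\{\mathbf x\in\mathcal M_k:\|\mathbf x-\mathbf x_k\|\le\Delta_k\}$. Search: a finite (possibly empty) set $\mathcal S_k\subset\mathcal M_k$ is examined; if some $\mathbf s\in\mathcal S_k$ satisfies $z(\mathbf s;\rho_k)<z(\mathbf x_k;\rho_k)$, set $\mathbf x_{k+1}=\mathbf s$, $\Delta_{k+1}=\Delta_k/\theta_\Delta$, $\rho_{k+1}=\rho_k$ (successful iteration). Otherwise poll: choose a finite set $\mathcal D_k$ of nonzero directions with $\mathbf x_k+\mathbf d\in\mathcal F_k$ for all $\mathbf d\in\mathcal D_k$;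 if some $\mathbf d\in\mathcal D_k$ satisfies $z(\mathbf x_k+\mathbf d;\rho_k)<z(\mathbf x_k;\rho_k)$, set $\mathbf x_{k+1}=\mathbf x_k+\mathbf d$, $\Delta_{k+1}=\Delta_k/\theta_\Delta$, $\rho_{k+1}=\rho_k$ (successful). Otherwise the iteration is unsuccessful: $\mathbf x_{k+1}=\mathbf x_k$, $\Delta_{k+1}=\theta_\Delta\Delta_k$, and $\rho_{k+1}=\theta_\rho\rho_k$ if $\Delta_{k+1}\le\min\{\rho_k^\beta,[\phi^{prox}(\mathbf x_k)]^2\}$, else $\rho_{k+1}=\rho_k$. The path-following index set is $\mathcal K_\rho=\{k:\rho_{k+1}<\rho_k\}$ and $\{\mathbf x_k\}_{k\in\mathcal K_\rho}$ is the path-following subsequence. A point $\bar{\mathbf x}$ is an end-path point if there is an infinite $\mathcal K_\rho^{x}\subseteq\mathcal K_\rho$ with $\lim_{k\in\mathcal K_\rho^x}\mathbf x_k=\bar{\mathbf x}$; $\{\mathbf x_k\}_{k\in\mathcal K^x_\rho}$ is then an end-path subsequence. Assumption 1: for every $\alpha\in\mathbb R$ the level set $\{\mathbf x\in\mathbb R^n: f(\mathbf x)\le\alpha\}$ is bounded. *)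

From HB Require Import structures.
From mathcomp Require Import all_boot all_order all_algebra.
From mathcomp Require Import all_classical all_reals.
From mathcomp Require Import exp.
Set Implicit Arguments. Unset Strict Implicit. Unset Printing Implicit Defensive.
Import Order.TTheory GRing.Theory Num.Theory.
Local Open Scope ring_scope.

Section MadsPip.
Variables (R : realType) (n m p : nat).
Implicit Types (x y s d : 'rV[R]_n).

Definition enorm x : R := Num.sqrt (\sum_(i < n) x ord0 i ^+ 2).

Variables (f : 'rV[R]_n -> \bar R) (g : 'I_m -> 'rV[R]_n -> \bar R)
          (h : 'I_p -> 'rV[R]_n -> \bar R) (Gint : {set 'I_m}).
(* G^ext is the complement ~: Gint of Gint in {1,...,m}. *)

Definition phi_prox x : \bar R := \big[Order.max/-oo%E]_(l in Gint) g l x.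

(* [phi^prox(x)]^2, read as +oo when G^int is empty *)
Definition phi_prox_sq x : \bar R :=
  if Gint == finset.set0 then +oo%E else (phi_prox x * phi_prox x)%E.

Definition c_int x : \bar R :=
  if [forall l in Gint, (g l x <= 0)%E]
  then (- \prod_(l in Gint) Order.min 1%E (- g l x))%E
  else phi_prox x.

Definition c_ext x : \bar R :=
  (\sum_(l in ~: Gint) (Order.max 0%E (g l x) * Order.max 0%E (g l x))
   + \sum_(j < p) (h j x * h j x))%E.

Definition zmerit (rho : R) x : \bar R :=
  if (c_int x < 0)%E
  then (f x - (rho * ln (- fine (c_int x)))%:E + (rho^-1)%:E * c_ext x)%E
  else +oo%E.

Definition on_mesh (xk : 'rV[R]_n) (delta : R) s : Prop :=
  exists u : 'rV[int]_n, s = xk + delta *: map_mx (fun z : int => z%:~R) u.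

Definition on_frame (xk : 'rV[R]_n) (delta Delta : R) s : Prop :=
  on_mesh xk delta s /\ enorm (s - xk) <= Delta.

Definition mesh_size (Delta Delta0 : R) : R := Order.min Delta (Delta ^+ 2 / Delta0).

Definition mads_pip_inputs (x0 : 'rV[R]_n) (rho0 theta_rho Delta0 theta_Delta beta : R)
  : Prop :=
  [/\ (forall l, l \in Gint -> (g l x0 < 0)%E),
      (zmerit rho0 x0 < +oo)%E,
      0 < rho0, 0 < theta_rho < 1 &
      [/\ 0 < Delta0, 0 < theta_Delta < 1,
          (exists q : rat, theta_Delta = ratr q) & 1 < beta]].

(* One iteration k of MADS-PIP (search set S_k and poll set D_k are
   chosen arbitrarily, subject to the algorithm's requirements). *)
Definition mads_pip_step (Delta0 theta_rho theta_Delta beta : R)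
  (x : nat -> 'rV[R]_n) (rho Delta : nat -> R) (k : nat) : Prop :=
  let zk := zmerit (rho k) in
  let dk := mesh_size (Delta k) Delta0 in
  let success y :=
    [/\ x k.+1 = y, Delta k.+1 = Delta k / theta_Delta & rho k.+1 = rho k] in
  exists S : seq 'rV[R]_n,
    (forall s, s \in S -> on_mesh (x k) dk s) /\
    ( (* successful search *)
      (exists s, [/\ s \in S, (zk s < zk (x k))%E & success s])
    \/ ((forall s, s \in S -> ~ (zk s < zk (x k))%E) /\
        exists D : seq 'rV[R]_n,
          (forall d, d \in D -> d != 0 /\ on_frame (x k) dk (Delta k) (x k + d)) /\
          ( (* successful poll *)
            (exists d, [/\ d \in D, (zk (x k + d)%R < zk (x k))%E & success (x k + d)])
          \/ (* unsuccessful iteration *)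
            [/\ (forall d, d \in D -> ~ (zk (x k + d)%R < zk (x k))%E),
                x k.+1 = x k,
                Delta k.+1 = theta_Delta * Delta k &
                rho k.+1 = if ((Delta k.+1)%:E <=
                               Order.min ((rho k `^ beta)%:E) (phi_prox_sq (x k)))%E
                           then theta_rho * rho k else rho k]))).

Definition mads_pip_run (x0 : 'rV[R]_n) (rho0 theta_rho Delta0 theta_Delta beta : R)
  (x : nat -> 'rV[R]_n) (rho Delta : nat -> R) : Prop :=
  [/\ x 0%N = x0, rho 0%N = rho0, Delta 0%N = Delta0 &
      forall k, mads_pip_step Delta0 theta_rho theta_Delta beta x rho Delta k].

Definition assumption1 : Prop :=
  forall alpha : R, exists M : R, forall y, (f y <= alpha%:E)%E -> enorm y <= M.

End MadsPip.

(* The mesh size only shrinks at unsuccessful iterations, and the barrier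
   parameter is decreased (by the factor theta_rho) only when the new mesh size
   satisfies Delta_{k+1} = theta_Delta Delta_k <= rho_k^beta.  Hence on the
   path-following iterations Delta_k <= rho_k^beta / theta_Delta.  If there are
   finitely many such iterations the claim is vacuous; otherwise rho_k is
   multiplied by theta_rho infinitely often and never increases, so it tends
   to 0, and with it rho_k^beta <= rho_k once rho_k <= 1. *)

From HB Require Import structures.
From mathcomp Require Import all_boot all_order all_algebra.
From mathcomp Require Import all_classical all_reals.
From mathcomp Require Import exp.
From mathcomp Require Import all_analysis.
Import Order.TTheory GRing.Theory Num.Theory.
Import numFieldNormedType.Exports.
Local Open Scope classical_set_scope.
Local Open Scope ring_scope.

Lemma geometric_lt (R : realType) (a t c : R) :
  `|t| < 1 -> 0 < c -> exists j : nat, a * t ^+ j < c.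
Proof.
move=> t_lt1 c_gt0.
have a_tj_cvg0 : (fun j : nat => a * t ^+ j) @ \oo --> 0.
  by rewrite -(mulr0 a); apply: cvgMl_tmp; exact: cvg_expr.
have [N _ HN] := cvgr_lt _ a_tj_cvg0 _ c_gt0.
by exists N; apply: HN => /=.
Qed.

Section ContractedSequence.
Context {R : realType} {u : nat -> R} {t : R}.
Hypotheses (t_ge0 : 0 <= t) (t_lt1 : t < 1) (u_ge0 : forall k, 0 <= u k).
Hypothesis u_step : forall k, u k.+1 = u k \/ u k.+1 = t * u k.

Lemma contracted_nonincreasing {i j : nat} : (i <= j)%N -> u j <= u i.
Proof.
move=> /subnK <-; elim: (j - i)%N => [|d IH] //.
rewrite addSn (le_trans _ IH) //.
by case: (u_step (d + i)) => ->; rewrite ?ler_piMl // ltW.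
Qed.

Lemma contracted_decrease k : u k.+1 < u k -> u k.+1 = t * u k.
Proof. by case: (u_step k) => // ->; rewrite ltxx. Qed.

Lemma contracted_geometric_bound :
  (forall N, exists2 k, (N <= k)%N & u k.+1 < u k) ->
  forall j : nat, exists N, u N <= u 0 * t ^+ j.
Proof.
move=> decr_often; elim=> [|j [N uN_le]]; first by exists 0%N; rewrite mulr1.
have [k Nk uk_decr] := decr_often N.
exists k.+1; rewrite contracted_decrease // exprS mulrCA ler_wpM2l //.
exact: le_trans (contracted_nonincreasing Nk) uN_le.
Qed.

Lemma contracted_small_at_decrease (c : R) : 0 < c ->
  exists N, forall k, (N <= k)%N -> u k.+1 < u k -> u k < c.
Proof.
move=> c_gt0.
have [[N no_decr]|not_eventually_stationary] :=
  pselect (exists N, forall k, (N <= k)%N -> ~ u k.+1 < u k).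
  by exists N => k /no_decr.
have decr_often N : exists2 k, (N <= k)%N & u k.+1 < u k.
  apply: contrapT => no_decr; apply: not_eventually_stationary; exists N => k Nk uk_decr.
  by apply: no_decr; exists k.
have [j u0tj_lt] : exists j : nat, u 0 * t ^+ j < c.
  by apply: geometric_lt; rewrite ?ger0_norm.
have [N uN_le] := contracted_geometric_bound decr_often j.
exists N => k Nk _.
exact: le_lt_trans (contracted_nonincreasing Nk) (le_lt_trans uN_le u0tj_lt).
Qed.

End ContractedSequence.

Section MadsPipRun.
Context {R : realType} {n m p : nat}.
Context {f : 'rV[R]_n -> \bar R} {g : 'I_m -> 'rV[R]_n -> \bar R}.
Context {h : 'I_p -> 'rV[R]_n -> \bar R} {Gint : {set 'I_m}}.
Context {Delta0 theta_rho theta_Delta beta : R}.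
Context {x : nat -> 'rV[R]_n} {rho Delta : nat -> R}.
Hypotheses (theta_rho_gt0 : 0 < theta_rho) (theta_rho_lt1 : theta_rho < 1).
Hypotheses (theta_Delta_gt0 : 0 < theta_Delta).
Hypotheses (rho0_gt0 : 0 < rho 0) (Delta0_gt0 : 0 < Delta 0).
Hypothesis beta_ge1 : 1 <= beta.
Hypothesis step :
  forall k, mads_pip_step f g h Gint Delta0 theta_rho theta_Delta beta x rho Delta k.

Lemma mads_pip_step_cases k :
  [/\ rho k.+1 = rho k \/ rho k.+1 = theta_rho * rho k,
      Delta k.+1 = Delta k / theta_Delta \/ Delta k.+1 = theta_Delta * Delta k &
      rho k.+1 <> rho k ->
        Delta k.+1 = theta_Delta * Delta k /\ Delta k.+1 <= rho k `^ beta].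
Proof.
have [S [_ [[s [_ _ [_ -> ->]]]|]]] := step k; first by split; [left|left|].
move=> [_ [D [_ [[d [_ _ [_ -> ->]]]|[_ _ -> ->]]]]]; first by split; [left|left|].
case: ifP => [|_]; last by split; [left|right|].
rewrite le_min lee_fin => /andP[Delta_le _].
by split; [right|right|].
Qed.

Lemma rho_gt0 k : 0 < rho k.
Proof.
elim: k => // k rhok_gt0.
by have [[->|->] _ _] := mads_pip_step_cases k; rewrite ?mulr_gt0.
Qed.

Lemma Delta_gt0 k : 0 < Delta k.
Proof.
elim: k => // k Deltak_gt0.
by have [_ [->|->] _] := mads_pip_step_cases k; rewrite ?divr_gt0 ?mulr_gt0.
Qed.

Lemma Delta_le_at_rho_decrease k :
  rho k.+1 < rho k -> Delta k <= rho k `^ beta / theta_Delta.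
Proof.
move=> rho_decr.
have rho_neq : rho k.+1 <> rho k by apply/eqP; rewrite lt_eqF.
have [_ _ /(_ rho_neq)[Delta_next Delta_next_le]] := mads_pip_step_cases k.
by rewrite ler_pdivlMr // mulrC -Delta_next.
Qed.

Lemma Delta_small_on_path_following (eps : R) : 0 < eps ->
  exists N, forall k, (N <= k)%N -> rho k.+1 < rho k -> `|Delta k| < eps.
Proof.
move=> eps_gt0; pose c := Order.min 1 (eps * theta_Delta).
have c_gt0 : 0 < c by rewrite lt_min ltr01 mulr_gt0.
have rho_step k : rho k.+1 = rho k \/ rho k.+1 = theta_rho * rho k.
  by case: (mads_pip_step_cases k).
have [N rho_small] := contracted_small_at_decrease (ltW theta_rho_gt0)
  theta_rho_lt1 (fun k => ltW (rho_gt0 k)) rho_step c c_gt0.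
exists N => k Nk rho_decr; have rhok_lt_c := rho_small k Nk rho_decr.
rewrite gtr0_norm ?Delta_gt0 //.
apply: le_lt_trans (Delta_le_at_rho_decrease k rho_decr) _.
have rhok_le1 : 0 < rho k <= 1.
  by rewrite rho_gt0 ltW // (lt_le_trans rhok_lt_c) // ge_min lexx.
rewrite ltr_pdivrMr //; apply: le_lt_trans (ge1r_powR rhok_le1 beta_ge1) _.
by rewrite (lt_le_trans rhok_lt_c) // ge_min lexx orbT.
Qed.

End MadsPipRun.

Theorem mainTheorem2 (R : realType) (n m p : nat)
  (f : 'rV[R]_n -> \bar R) (g : 'I_m -> 'rV[R]_n -> \bar R)
  (h : 'I_p -> 'rV[R]_n -> \bar R) (Gint : {set 'I_m})
  (x0 : 'rV[R]_n) (rho0 theta_rho Delta0 theta_Delta beta : R)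
  (x : nat -> 'rV[R]_n) (rho Delta : nat -> R) :
  (forall y, f y != -oo%E) ->
  (forall l y, g l y != -oo%E) ->
  (forall j y, h j y != -oo%E) ->
  assumption1 f ->
  mads_pip_inputs f g h Gint x0 rho0 theta_rho Delta0 theta_Delta beta ->
  mads_pip_run f g h Gint x0 rho0 theta_rho Delta0 theta_Delta beta x rho Delta ->
  (* lim_{k in K_rho} Delta_k = 0, where K_rho = {k | rho_{k+1} < rho_k} *)
  forall eps : R, 0 < eps ->
    exists N : nat, forall k : nat, (N <= k)%N -> rho k.+1 < rho k ->
      `|Delta k| < eps.
Proof.
move=> _ _ _ _ [_ _ rho0_gt0 /andP[theta_rho_gt0 theta_rho_lt1]].
move=> [Delta0_gt0 /andP[theta_Delta_gt0 _] _ beta_gt1] [_ rho_0 Delta_0 step].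
rewrite -rho_0 in rho0_gt0; rewrite -Delta_0 in Delta0_gt0.
exact: (Delta_small_on_path_following theta_rho_gt0 theta_rho_lt1
  theta_Delta_gt0 rho0_gt0 Delta0_gt0 (ltW beta_gt1) step).
Qed.
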